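(* Let ${\bf Q}$ be an orthogonal projection on ${\cal H}$, let $s_1,s_2,s_3\in\mathbb{C}$ with $s_1^2+s_2^2+s_3^2=1$ and $s_1\ne0$, let $z\in\mathbb{C}\setminus\{0\}$, and put $\underline z=s_1^2z+s_2^2$, assumed nonzero. On ${\cal H}^3$ let $\underline{\bf Q}$ have block entries $\underline{\bf Q}_{ij}=s_is_j{\bf Q}$ and let $\underline\Gamma=\mathrm{diag}(\Gamma,{\bf I},0)$. Let ${\bf E},{\bf h}\in{\cal H}$ with $\Gamma{\bf E}={\bf E}$, $\Gamma{\bf h}={\bf h}$. Then $$({\bf I}-\Gamma{\bf Q}/z){\bf E}={\bf h}$$ holds if and only if there exists ${\bf E}_1\in{\cal H}$ such that $\underline{\bf E}=({\bf E},{\bf E}_1,0)$ satisfies $$\underline\Gamma({\bf I}-\underline{\bf Q}/\underline z)\underline{\bf E}=({\bf h},0,0);$$ in that case necessarily ${\bf E}_1=s_2{\bf Q}{\bf E}/(s_1z)$. In particular, whenever the corresponding inverses exist on the ranges of $\Gamma$ and $\underline\Gamma$, $[{\bf I}-\Gamma{\bf Q}/z]^{-1}{\bf h}=\underline{\bf G}^\dagger[{\bf I}-\underline\Gamma\underline{\bf Q}/\underline z]^{-1}\underline{\bf G}{\bf h}$, where $\underline{\bf G}{\bf h}=({\bf h},0,0)$ and $\underline{\bf G}^\dagger({\bf a},{\bf b},{\bf c})={\bf a}$.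
   Context: ${\cal H}$ is a complex Hilbert space and $\Gamma$ is an orthogonal projection on ${\cal H}$. ${\cal H}^3$ carries the direct-sum Hilbert structure. *)

From HB Require Import structures.
From mathcomp Require Import all_boot all_order all_algebra.
From mathcomp Require Import complex.
From mathcomp Require Import reals.
Set Implicit Arguments. Unset Strict Implicit. Unset Printing Implicit Defensive.
Import Order.TTheory GRing.Theory Num.Theory.
Local Open Scope ring_scope.

Definition is_inner_product (R : realType) (V : lmodType R[i])
  (ip : V -> V -> R[i]) : Prop :=
  [/\ (forall (a : R[i]) (x y w : V), ip (a *: x + y) w = a * ip x w + ip y w),
      (forall x y : V, ip y x = Num.conj (ip x y)),
      (forall x : V, 0 <= ip x x) &
      (forall x : V, ip x x = 0 -> x = 0)].

Definition sqnorm (R : realType) (V : lmodType R[i]) (ip : V -> V -> R[i])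
  (x : V) : R := complex.Re (ip x x).

Definition ip_complete (R : realType) (V : lmodType R[i])
  (ip : V -> V -> R[i]) : Prop :=
  forall u : nat -> V,
    (forall e : R, 0 < e -> exists N : nat, forall m n : nat,
        (N <= m)%N -> (N <= n)%N -> sqnorm ip (u m - u n) < e) ->
    exists l : V, forall e : R, 0 < e -> exists N : nat, forall n : nat,
        (N <= n)%N -> sqnorm ip (u n - l) < e.

Definition is_hilbert (R : realType) (V : lmodType R[i])
  (ip : V -> V -> R[i]) : Prop := is_inner_product ip /\ ip_complete ip.

Definition orth_proj (R : realType) (V : lmodType R[i])
  (ip : V -> V -> R[i]) (P : {linear V -> V}) : Prop :=
  (forall x, P (P x) = P x) /\ (forall x y, ip (P x) y = ip x (P y)).

Definition blockQ (R : realType) (V : lmodType R[i]) (Q : V -> V)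
  (s1 s2 s3 : R[i]) (x : V * V * V) : V * V * V :=
  let: (a, b, c) := x in
  ( s1 * s1 *: Q a + s1 * s2 *: Q b + s1 * s3 *: Q c,
    s2 * s1 *: Q a + s2 * s2 *: Q b + s2 * s3 *: Q c,
    s3 * s1 *: Q a + s3 * s2 *: Q b + s3 * s3 *: Q c).

Definition blockGamma (R : realType) (V : lmodType R[i]) (G : V -> V)
  (x : V * V * V) : V * V * V :=
  let: (a, b, c) := x in (G a, b, 0).

Definition embG (R : realType) (V : lmodType R[i]) (h : V) : V * V * V :=
  (h, 0, 0).
Definition embGdag (R : realType) (V : lmodType R[i]) (x : V * V * V) : V :=
  x.1.1.

From HB Require Import structures.
From mathcomp Require Import all_boot all_order all_algebra.
From mathcomp Require Import complex.
From mathcomp Require Import reals.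
From mathcomp Require Import ring.
Import Order.TTheory GRing.Theory Num.Theory.
Set Implicit Arguments.
Unset Strict Implicit.
Unset Printing Implicit Defensive.

Local Open Scope ring_scope.

(* On a vector (E, E1, 0), the block operator produces (s1 w, s2 w, s3 w) with
   w = s1 Q E + s2 Q E1.  The second row of the lifted equation, E1 = s2 w / zu,
   forces Q E1 = c Q E with c = s2 / (s1 z), hence E1 = c Q E; substituting back,
   s1 w / zu = Q E / z, so the first row is exactly (I - Gamma Q / z) E = h. *)

Lemma scale_fixpoint_solve (F : fieldType) (W : lmodType F) (u v : W) (a b : F) :
  b != 1 -> u = a *: v + b *: u -> u = (a / (1 - b)) *: v.
Proof.
rewrite -subr_eq0 -oppr_eq0 opprB => b1 def_u.
have : (1 - b) *: u = a *: v by rewrite scalerBl scale1r {1}def_u addrK.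
by move/(canRL (scalerK b1)); rewrite scalerA mulrC.
Qed.

Lemma blockQE (R : realType) (V : lmodType R[i]) (Q : V -> V)
    (s1 s2 s3 : R[i]) (a b c : V) :
  let w := s1 *: Q a + s2 *: Q b + s3 *: Q c in
  blockQ Q s1 s2 s3 (a, b, c) = (s1 *: w, s2 *: w, s3 *: w).
Proof. by rewrite /blockQ !scalerDr !scalerA. Qed.

Lemma blockGammaBZ (R : realType) (V : lmodType R[i]) (G : {linear V -> V})
    (k : R[i]) (x y : V * V * V) :
  blockGamma G (x - k *: y) = blockGamma G x - k *: blockGamma G y.
Proof.
case: x y => [[a b] d] [[a' b'] d'].
rewrite /blockGamma /= linearB linearZ /=.
by rewrite -{1}(subr0 0) -{2}(scaler0 _ k).
Qed.

Lemma blockB_fixed (R : realType) (V : lmodType R[i]) (G : {linear V -> V})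
    (K : V * V * V -> V * V * V) (k : R[i]) (x : V * V * V) :
  blockGamma G x = x ->
  x - k *: blockGamma G (K x) = blockGamma G (x - k *: K x).
Proof. by move=> Gx; rewrite blockGammaBZ Gx. Qed.

Section Lift.

Variables (R : realType) (V : lmodType R[i]) (Gam Q : {linear V -> V}).
Variables (s1 s2 s3 z : R[i]).
Hypothesis Q_idem : forall x, Q (Q x) = Q x.
Hypotheses (s1_neq0 : s1 != 0) (z_neq0 : z != 0).
Hypothesis zu_neq0 : s1 ^+ 2 * z + s2 ^+ 2 != 0.

Let zu := s1 ^+ 2 * z + s2 ^+ 2.
Let c := (s1 * z)^-1 * s2.

Lemma lifted_blockAE (E E1 : V) :
  let w := s1 *: Q E + s2 *: Q E1 in
  blockGamma Gam ((E, E1, 0) - zu^-1 *: blockQ Q s1 s2 s3 (E, E1, 0)) =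
  (Gam (E - zu^-1 *: (s1 *: w)), E1 - zu^-1 *: (s2 *: w), 0).
Proof. by rewrite blockQE /blockGamma /= raddf0 scaler0 addr0. Qed.

Lemma weight_on_lift (E : V) :
  s1 *: Q E + s2 *: (c *: Q E) = (zu / (s1 * z)) *: Q E.
Proof.
rewrite scalerA -scalerDl; congr (_ *: _).
by rewrite /c /zu; field; rewrite s1_neq0 z_neq0.
Qed.

Lemma lift_second_row (E E1 : V) :
  E1 - zu^-1 *: (s2 *: (s1 *: Q E + s2 *: Q E1)) = 0 <-> E1 = c *: Q E.
Proof.
split => [/eqP|->]; last first.
  rewrite [Q (c *: _)]linearZ /= Q_idem weight_on_lift !scalerA.
  apply/eqP; rewrite subr_eq0; apply/eqP.
  by congr (_ *: _); rewrite /c /zu; field; rewrite s1_neq0 z_neq0 zu_neq0.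
rewrite subr_eq0 => /eqP def_E1.
have QE1 : Q E1 = c *: Q E.
  have def_QE1 : Q E1 = (zu^-1 * s2 * s1) *: Q E + (zu^-1 * s2 * s2) *: Q E1.
    by rewrite {1}def_E1 !linearZ linearD !linearZ /= !Q_idem !scalerDr !scalerA.
  have s2zu_neq1 : zu^-1 * s2 * s2 != 1.
    rewrite -subr_eq0; have -> : zu^-1 * s2 * s2 - 1 = - (s1 ^+ 2 * z / zu).
      by rewrite /zu; field.
    by rewrite oppr_eq0 !mulf_neq0 ?expf_neq0 ?invr_neq0.
  rewrite (scale_fixpoint_solve s2zu_neq1 def_QE1); congr (_ *: _).
  rewrite /c /zu; field; rewrite s1_neq0 z_neq0 zu_neq0 /=.
  by rewrite addrK mulf_neq0 ?expf_neq0.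
rewrite def_E1 QE1 weight_on_lift !scalerA; congr (_ *: _).
by rewrite /c /zu; field; rewrite s1_neq0 z_neq0 zu_neq0.
Qed.

Lemma lift_first_row (E : V) : Gam E = E ->
  Gam (E - zu^-1 *: (s1 *: (s1 *: Q E + s2 *: Q (c *: Q E)))) =
  E - z^-1 *: Gam (Q E).
Proof.
move=> GE; rewrite [Q (c *: _)]linearZ /= Q_idem weight_on_lift !scalerA.
rewrite linearB linearZ /= GE; congr (_ - _ *: _).
by rewrite /zu; field; rewrite s1_neq0 z_neq0 zu_neq0.
Qed.

Lemma lift_solution (E E1 h : V) :
  blockGamma Gam ((E, E1, 0) - zu^-1 *: blockQ Q s1 s2 s3 (E, E1, 0)) = (h, 0, 0) ->
  E1 = c *: Q E.
Proof. by rewrite lifted_blockAE => -[_ /lift_second_row]. Qed.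

Lemma lift_equation (E h : V) : Gam E = E ->
  E - z^-1 *: Gam (Q E) = h <->
  exists E1, blockGamma Gam ((E, E1, 0) - zu^-1 *: blockQ Q s1 s2 s3 (E, E1, 0))
             = (h, 0, 0).
Proof.
move=> GE; split => [<-|[E1 lifted]].
  exists (c *: Q E); rewrite lifted_blockAE lift_first_row //.
  by have /lift_second_row-> := erefl (c *: Q E).
move: (lifted); rewrite lifted_blockAE (lift_solution lifted) lift_first_row //.
by case.
Qed.

End Lift.

Theorem mainTheorem11 (R : realType) (V : lmodType R[i]) (ip : V -> V -> R[i])
  (Gam Q : {linear V -> V}) (s1 s2 s3 z : R[i]) :
  is_hilbert ip -> orth_proj ip Gam -> orth_proj ip Q ->
  s1 ^+ 2 + s2 ^+ 2 + s3 ^+ 2 = 1 -> s1 != 0 -> z != 0 ->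
  s1 ^+ 2 * z + s2 ^+ 2 != 0 ->
  let zu := s1 ^+ 2 * z + s2 ^+ 2 in
  let A := fun x : V => x - z^-1 *: Gam (Q x) in
  let Au := fun x : V * V * V =>
    blockGamma Gam (x - zu^-1 *: blockQ Q s1 s2 s3 x) in
  let Bu := fun x : V * V * V =>
    x - zu^-1 *: blockGamma Gam (blockQ Q s1 s2 s3 x) in
  (forall E h : V, Gam E = E -> Gam h = h ->
     (A E = h <-> exists E1 : V, Au (E, E1, 0) = (h, 0, 0))) /\
  (forall E h E1 : V, Gam E = E -> Gam h = h ->
     Au (E, E1, 0) = (h, 0, 0) -> E1 = (s1 * z)^-1 *: (s2 *: Q E)) /\
  (forall (Ainv : V -> V) (Buinv : V * V * V -> V * V * V),
     (forall h, Gam h = h -> Gam (Ainv h) = Ainv h /\ A (Ainv h) = h) ->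
     (forall x, Gam x = x -> Ainv (A x) = x) ->
     (forall y, blockGamma Gam y = y ->
        blockGamma Gam (Buinv y) = Buinv y /\ Bu (Buinv y) = y) ->
     (forall x, blockGamma Gam x = x -> Buinv (Bu x) = x) ->
     forall h, Gam h = h -> Ainv h = embGdag (Buinv (embG h))).
Proof.
move=> _ _ [Q_idem _] _ s1_neq0 z_neq0 zu_neq0 zu A Au Bu.
have lift := lift_equation (Gam := Gam) s3 Q_idem s1_neq0 z_neq0 zu_neq0.
split=> [E h GE _|]; first exact: lift.
split=> [E h E1 _ _|Ainv Buinv Ainv_inv _ _ Buinv_inv h Gh].
  by move/(lift_solution Q_idem s1_neq0 z_neq0 zu_neq0); rewrite scalerA.
have [GE /(lift _ h GE)[E1 lifted]] := Ainv_inv h Gh.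
have fixed : blockGamma Gam (Ainv h, E1, 0) = (Ainv h, E1, 0) by rewrite /= GE.
by have := Buinv_inv _ fixed; rewrite /Bu blockB_fixed // lifted => ->.
Qed.
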